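(* For all nonnegative nonzero vectors $x,y\in\mathbb{R}^n$, $|\sin(x,y)|\le D(x,y)$.
   Context: $\sin(x,y)$ is the sine of the angle between $x$ and $y$, and $$D(x,y)=\frac{\left\|\frac{y}{\|y\|_1}-\frac{x}{\|x\|_1}\right\|_2}{\left\|\frac{y}{\|y\|_1}\right\|_2}.$$ *)

From HB Require Import structures.
From mathcomp Require Import all_boot all_order all_algebra.
From mathcomp Require Import all_classical all_reals all_analysis.
Set Implicit Arguments. Unset Strict Implicit. Unset Printing Implicit Defensive.
Import Order.TTheory GRing.Theory Num.Theory.
Local Open Scope ring_scope.

Section Defs.
Variables (R : realType) (n : nat).

Definition norm1 (x : 'rV[R]_n) : R := \sum_(i < n) `|x 0 i|.
Definition dotv (x y : 'rV[R]_n) : R := \sum_(i < n) x 0 i * y 0 i.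
Definition norm2 (x : 'rV[R]_n) : R := Num.sqrt (dotv x x).

Definition nonneg_vec (x : 'rV[R]_n) : Prop := forall i, 0 <= x 0 i.

Definition angle (x y : 'rV[R]_n) : R := acos (dotv x y / (norm2 x * norm2 y)).
Definition sin_angle (x y : 'rV[R]_n) : R := sin (angle x y).

Definition Dxy (x y : 'rV[R]_n) : R :=
  norm2 ((norm1 y)^-1 *: y - (norm1 x)^-1 *: x) / norm2 ((norm1 y)^-1 *: y).
End Defs.

(* The quotient D(x,y) is unchanged when its numerator and denominator are
   multiplied by ||y||_1, so D(x,y) = ||y - r x||_2 / ||y||_2 with
   r = ||y||_1 / ||x||_1.  Every point r x of the line spanned by x is at least
   as far from y as the orthogonal projection of y onto that line, whose
   distance from y is ||y||_2 |sin(x,y)|. *)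
From HB Require Import structures.
From mathcomp Require Import all_boot all_order all_algebra.
From mathcomp Require Import all_classical all_reals all_analysis.
From mathcomp Require Import ring.
Set Implicit Arguments.
Unset Strict Implicit.
Unset Printing Implicit Defensive.
Import Order.TTheory GRing.Theory Num.Theory.
Local Open Scope ring_scope.

Section InnerProduct.
Variables (R : realType) (n : nat).
Implicit Types (p q z : 'rV[R]_n) (a r : R).

Lemma dotvC p q : dotv p q = dotv q p.
Proof. by apply: eq_bigr => i _; rewrite mulrC. Qed.

Lemma dotvZl a p q : dotv (a *: p) q = a * dotv p q.
Proof. by rewrite /dotv mulr_sumr; apply: eq_bigr => i _; rewrite mxE mulrA. Qed.

Lemma dotvZr a p q : dotv p (a *: q) = a * dotv p q.
Proof. by rewrite dotvC dotvZl dotvC. Qed.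

Lemma dotv0r p : dotv p 0 = 0.
Proof. by rewrite -(scale0r 0) dotvZr mul0r. Qed.

Lemma dotv_ge0 z : 0 <= dotv z z.
Proof. by apply: sumr_ge0 => i _; rewrite -expr2 sqr_ge0. Qed.

Lemma dotv_gt0 z : z != 0 -> 0 < dotv z z.
Proof.
move=> z0; rewrite lt_neqAle dotv_ge0 andbT eq_sym; apply: contra z0 => /eqP zz0.
have sq0 := psumr_eq0P (fun i _ => sqr_ge0 (z 0 i)) zz0.
apply/eqP/rowP => i; rewrite mxE.
by have /eqP := sq0 i isT; rewrite mulf_eq0 orbb => /eqP.
Qed.

Lemma norm2Z a z : norm2 (a *: z) = `|a| * norm2 z.
Proof.
by rewrite /norm2 dotvZl dotvZr mulrA -expr2 sqrtrM ?sqr_ge0 // sqrtr_sqr.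
Qed.

Lemma norm2_gt0 z : z != 0 -> 0 < norm2 z.
Proof. by move=> z0; rewrite sqrtr_gt0 dotv_gt0. Qed.

Lemma norm1_gt0 z : z != 0 -> 0 < norm1 z.
Proof.
move=> z0; rewrite lt_neqAle eq_sym sumr_ge0 // andbT; apply: contra z0 => /eqP z1.
have abs0 := psumr_eq0P (fun i _ => normr_ge0 (z 0 i)) z1.
apply/eqP/rowP => i; rewrite mxE.
by have /eqP := abs0 i isT; rewrite normr_eq0 => /eqP.
Qed.

Lemma dotv_subZ p q r :
  dotv (p - r *: q) (p - r *: q)
  = dotv p p - 2 * r * dotv p q + r ^+ 2 * dotv q q.
Proof.
rewrite /dotv !mulr_sumr -!sumrB -big_split /=; apply: eq_bigr => i _.
by rewrite !mxE; ring.
Qed.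

(* Pythagoras: the first summand is the squared distance from [p] to the line
   spanned by [q]. *)
Lemma dotv_subZ_decomp p q r : q != 0 ->
  dotv (p - r *: q) (p - r *: q)
  = (dotv p p - dotv p q ^+ 2 / dotv q q)
    + (dotv p q - r * dotv q q) ^+ 2 / dotv q q.
Proof.
move=> q0; have qq0 := dotv_gt0 q0.
by rewrite dotv_subZ; field; rewrite gt_eqF.
Qed.

Lemma dotv_subZ_ge p q r : q != 0 ->
  dotv p p - dotv p q ^+ 2 / dotv q q <= dotv (p - r *: q) (p - r *: q).
Proof.
move=> q0; rewrite dotv_subZ_decomp // lerDl.
by rewrite divr_ge0 ?sqr_ge0 ?dotv_ge0.
Qed.

Lemma dotv_CauchySchwarz p q : dotv p q ^+ 2 <= dotv p p * dotv q q.
Proof.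
have [->|q0] := eqVneq q 0; first by rewrite !dotv0r expr0n mulr0.
have := dotv_ge0 (p - (dotv p q / dotv q q) *: q).
rewrite dotv_subZ_decomp // mulrVK ?unitfE ?gt_eqF ?dotv_gt0 //.
rewrite subrr expr0n mul0r addr0 subr_ge0.
by rewrite ler_pdivrMr ?dotv_gt0.
Qed.

Lemma sin_angleE p q : p != 0 -> q != 0 ->
  sin_angle p q = Num.sqrt (1 - dotv p q ^+ 2 / (dotv p p * dotv q q)).
Proof.
move=> p0 q0; have pq0 : 0 < dotv p p * dotv q q by rewrite mulr_gt0 ?dotv_gt0.
have cos2 : (dotv p q / (norm2 p * norm2 q)) ^+ 2
            = dotv p q ^+ 2 / (dotv p p * dotv q q).
  by rewrite expr_div_n exprMn !sqr_sqrtr ?dotv_ge0.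
rewrite /sin_angle /angle sin_acos ?cos2 //.
rewrite -ler_norml -(@ler_pXn2r _ 2) ?nnegrE // expr1n real_normK ?num_real //.
by rewrite cos2 ler_pdivrMr // mul1r dotv_CauchySchwarz.
Qed.

Lemma sin_angle_norm2_le p q r : p != 0 -> q != 0 ->
  `|sin_angle p q| * norm2 q <= norm2 (q - r *: p).
Proof.
move=> p0 q0; have pp0 := dotv_gt0 p0; have qq0 := dotv_gt0 q0.
have cos2_le1 : dotv p q ^+ 2 / (dotv p p * dotv q q) <= 1.
  by rewrite ler_pdivrMr ?mulr_gt0 // mul1r dotv_CauchySchwarz.
rewrite sin_angleE // ger0_norm ?sqrtr_ge0 // /norm2 -sqrtrM ?subr_ge0 //.
rewrite ler_sqrt ?dotv_ge0 //.
have -> : (1 - dotv p q ^+ 2 / (dotv p p * dotv q q)) * dotv q q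
          = dotv q q - dotv q p ^+ 2 / dotv p p.
  by rewrite (dotvC q p); field; rewrite !gt_eqF.
exact: dotv_subZ_ge.
Qed.

Lemma DxyE p q : p != 0 -> q != 0 ->
  Dxy p q = norm2 (q - (norm1 q / norm1 p) *: p) / norm2 q.
Proof.
move=> p0 q0; have p1 := norm1_gt0 p0; have q1 := norm1_gt0 q0.
rewrite /Dxy; have -> : (norm1 q)^-1 *: q - (norm1 p)^-1 *: p
          = (norm1 q)^-1 *: (q - (norm1 q / norm1 p) *: p).
  by rewrite scalerBr scalerA mulKf ?gt_eqF.
rewrite !norm2Z -mulf_div divff ?mul1r //.
by rewrite normr_eq0 invr_eq0 gt_eqF.
Qed.

End InnerProduct.

Theorem lemmaA3 (R : realType) (n : nat) (x y : 'rV[R]_n) :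
  nonneg_vec x -> nonneg_vec y -> x != 0 -> y != 0 ->
  `|sin_angle x y| <= Dxy x y.
Proof.
move=> _ _ x0 y0.
rewrite DxyE // ler_pdivlMr ?norm2_gt0 //.
exact: sin_angle_norm2_le.
Qed.
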